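(* Let $R>0$ and $d\in\mathbb{N}$ be such that $R-x\in\mathcal Q((1-x^2)^3)_d$. Then for every $k\in\mathbb{N}$ we have $R-x^k,\ R+x^k\in\mathcal Q((1-x^2)^3)_{dk}$ and $R-T_k(x),\ R+T_k(x)\in\mathcal Q((1-x^2)^3)_{dk}$.
   Context: For univariate polynomials, $\Sigma[x]_m$ is the cone of sums of squares of degree at most $m$, and $\mathcal Q((1-x^2)^3)_m=\Sigma[x]_m+(1-x^2)^3\Sigma[x]_{m-6}$. $T_k(x)=\cos(k\arccos x)$ is the Chebyshev polynomial of the first kind. *)

From HB Require Import structures.
From mathcomp Require Import all_boot all_order all_algebra.
From mathcomp Require Import reals.
Set Implicit Arguments. Unset Strict Implicit. Unset Printing Implicit Defensive.
Import Order.TTheory GRing.Theory Num.Theory.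
Local Open Scope ring_scope.

Definition is_sos (R : realType) (f : {poly R}) : Prop :=
  exists s : seq {poly R}, f = \sum_(p <- s) p ^+ 2.

(* Sigma[x]_m : sums of squares of degree at most m (deg f <= m <-> size f <= m+1).
   The zero polynomial has degree -oo, so it belongs to every Sigma[x]_m. *)
Definition sos_deg (R : realType) (m : nat) (f : {poly R}) : Prop :=
  is_sos f /\ (size f <= m.+1)%N.

(* Sigma[x]_(m - 6) with m possibly < 6 : for m - 6 < 0 it is {0}. *)
Definition sos_deg_minus6 (R : realType) (m : nat) (f : {poly R}) : Prop :=
  is_sos f /\ (f = 0 \/ (size f + 6 <= m.+1)%N).

Definition gQ (R : realType) : {poly R} := (1 - 'X ^+ 2) ^+ 3.

Definition inQ (R : realType) (m : nat) (f : {poly R}) : Prop :=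
  exists s0 s1 : {poly R},
    sos_deg m s0 /\ sos_deg_minus6 m s1 /\ f = s0 + gQ R * s1.

(* Chebyshev polynomials of the first kind, T_k(cos t) = cos (k t),
   via the standard three-term recurrence. *)
Fixpoint cheb_pair (R : realType) (k : nat) : {poly R} * {poly R} :=
  match k with
  | 0 => (1, 'X)
  | k'.+1 => let (a, b) := cheb_pair R k' in (b, 2%:R *: 'X * b - a)
  end.
Definition chebT (R : realType) (k : nat) : {poly R} := (cheb_pair R k).1.

From HB Require Import structures.
From mathcomp Require Import all_boot all_order all_algebra.
From mathcomp Require Import reals.
From mathcomp Require Import ring zify.
Import Order.TTheory GRing.Theory Num.Theory.
Local Open Scope ring_scope.

(* Write [r - x = s0 + (1 - x^2)^3 s1].  If [p] has degree at most [k] and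
   [1 - p^2 = (1 - x^2) h] with [h] a sum of squares, substituting [x := p]
   gives [r - p = s0(p) + (1 - x^2)^3 (h^3 s1(p))], a certificate of degree
   [d k]; the same applies to [-p].  Both [x^k] and [T_k] admit such an [h]:
   [1 - x^(2k) = (1 - x^2) (1 + x^2 + ... + x^(2k-2))] and the Pell equation
   [1 - T_k^2 = (1 - x^2) U_(k-1)^2]. *)

Section SumsOfSquares.
Context {R : realType}.
Implicit Types p q s : {poly R}.

Lemma is_sos_sqr q : is_sos (q ^+ 2).
Proof. by exists [:: q]; rewrite big_seq1. Qed.

Lemma is_sosD p q : is_sos p -> is_sos q -> is_sos (p + q).
Proof. by move=> [s ->] [t ->]; exists (s ++ t); rewrite big_cat. Qed.

Lemma is_sos_sum (I : Type) (r : seq I) (F : I -> {poly R}) :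
  (forall i, is_sos (F i)) -> is_sos (\sum_(i <- r) F i).
Proof.
move=> sosF; apply: (big_ind (@is_sos R)) => //; last exact: is_sosD.
by exists [::]; rewrite big_nil.
Qed.

Lemma is_sosM p q : is_sos p -> is_sos q -> is_sos (p * q).
Proof.
move=> [s ->] [t ->]; exists [seq a * b | a <- s, b <- t].
rewrite big_allpairs_dep mulr_suml; apply: eq_bigr => a _.
by rewrite mulr_sumr; apply: eq_bigr => b _; rewrite exprMn.
Qed.

Lemma is_sosX p n : is_sos p -> is_sos (p ^+ n).
Proof.
move=> sos_p; elim: n => [|n IHn]; last by rewrite exprS; exact: is_sosM.
by rewrite expr0 -(expr1n _ 2); exact: is_sos_sqr.
Qed.

Lemma is_sos_comp p q : is_sos p -> is_sos (p \Po q).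
Proof.
move=> [s ->]; exists [seq a \Po q | a <- s].
by rewrite rmorph_sum big_map; apply: eq_bigr => a _; rewrite rmorphXn.
Qed.

End SumsOfSquares.

Section Substitution.
Context {R : realType}.
Implicit Types p h s : {poly R}.

Lemma size_onem_sqrX : size (1 - 'X ^+ 2 : {poly R}) = 3%N.
Proof. by rewrite -opprB size_polyN -polyC1 size_XnsubC. Qed.

Lemma size_pell_cofactor p h k :
  1 - p ^+ 2 = (1 - 'X ^+ 2) * h -> (size p <= k.+1)%N ->
  (size h <= (2 * k).-1)%N.
Proof.
move=> pell size_p; have [->|h_neq0] := eqVneq h 0; first by rewrite size_poly0.
have onem_neq0 : (1 - 'X ^+ 2 : {poly R}) != 0.
  by rewrite -size_poly_eq0 size_onem_sqrX.
have size_sqr : (size (p ^+ 2) <= (2 * k).+1)%N.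
  by apply: leq_trans (size_poly_exp_leq p 2) _; lia.
have size_pell : ((size h).+2 <= maxn 1 (size (p ^+ 2)))%N.
  move: (size_polyD 1 (- p ^+ 2)).
  by rewrite pell size_mul // size_onem_sqrX size_polyN size_poly1.
lia.
Qed.

Lemma sos_deg_comp d k p s :
  sos_deg d s -> (size p <= k.+1)%N -> sos_deg (d * k) (s \Po p).
Proof.
move=> [sos_s size_s] size_p; split; first exact: is_sos_comp.
apply: leq_trans (size_comp_poly_leq _ _) _; rewrite ltnS.
by apply: leq_mul; lia.
Qed.

Lemma sos_deg_minus6_comp d k p h s :
  sos_deg_minus6 d s -> is_sos h ->
  (size p <= k.+1)%N -> (size h <= (2 * k).-1)%N ->
  sos_deg_minus6 (d * k) (h ^+ 3 * (s \Po p)).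
Proof.
move=> [sos_s size_s] sos_h size_p size_h.
split; first by apply: is_sosM; [exact: is_sosX | exact: is_sos_comp].
have [->|s_neq0] := eqVneq s 0; first by left; rewrite comp_poly0 mulr0.
have [->|h_neq0] := eqVneq h 0; first by left; rewrite expr0n mul0r.
right; case: size_s => [/eqP|size_s]; first by rewrite (negPf s_neq0).
move: s_neq0 h_neq0; rewrite -!size_poly_gt0 => s_gt0 h_gt0.
have k_gt0 : (0 < k)%N by lia.
have size_comp : (size (s \Po p) <= ((size s).-1 * k).+1)%N.
  apply: leq_trans (size_comp_poly_leq s p) _; rewrite ltnS.
  by apply: leq_mul => //; lia.
have size_h3 : (size (h ^+ 3) <= 6 * k - 5)%N.
  by apply: leq_trans (size_poly_exp_leq h 3) _; lia.
have size_sk : ((size s).-1 * k + 6 * k <= d * k)%N.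
  by rewrite -mulnDl; apply: leq_mul => //; lia.
apply: leq_trans (leq_add (size_polyMleq _ _) (leqnn 6)) _; lia.
Qed.

Lemma inQ_comp_sub r d k p h :
  inQ d (r%:P - 'X) -> 1 - p ^+ 2 = (1 - 'X ^+ 2) * h -> is_sos h ->
  (size p <= k.+1)%N -> inQ (d * k) (r%:P - p).
Proof.
move=> [s0 [s1 [s0_deg [s1_deg decomp]]]] pell sos_h size_p.
exists (s0 \Po p), (h ^+ 3 * (s1 \Po p)); split; [|split].
- exact: sos_deg_comp.
- by apply: sos_deg_minus6_comp => //; exact: size_pell_cofactor pell size_p.
- have := congr1 (comp_poly p) decomp.
  rewrite comp_polyB comp_polyC comp_polyX => ->.
  rewrite comp_polyD comp_polyM /gQ rmorphXn rmorphB rmorph1 rmorphXn /=.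
  by rewrite comp_polyX pell; ring.
Qed.

Lemma inQ_comp {r d k p h} :
  inQ d (r%:P - 'X) -> 1 - p ^+ 2 = (1 - 'X ^+ 2) * h -> is_sos h ->
  (size p <= k.+1)%N -> inQ (d * k) (r%:P - p) /\ inQ (d * k) (r%:P + p).
Proof.
move=> hQ pell sos_h size_p; split; first exact: inQ_comp_sub pell sos_h size_p.
rewrite -[p]opprK; apply: inQ_comp_sub hQ _ sos_h _; first by rewrite sqrrN.
by rewrite size_polyN.
Qed.

End Substitution.

Lemma onem_sqr_expr {R : comPzRingType} (x : R) k :
  1 - (x ^+ k) ^+ 2 = (1 - x ^+ 2) * \sum_(i < k) (x ^+ i) ^+ 2.
Proof.
rewrite exprAC -[LHS]opprB subrX1 -mulNr opprB; congr (_ * _).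
by apply: eq_bigr => i _; rewrite exprAC.
Qed.

Section Chebyshev.
Context {R : realType}.

(* [chebTU k = (T_k, U_(k-1))]: the coordinates of [(x + sqrt(x^2 - 1))^k]
   on the basis [1, sqrt(x^2 - 1)]. *)
Fixpoint chebTU (k : nat) : {poly R} * {poly R} :=
  if k is k'.+1 then
    let (t, u) := chebTU k' in ('X * t - (1 - 'X ^+ 2) * u, 'X * u + t)
  else (1, 0).

Lemma chebTU_pell k :
  1 - (chebTU k).1 ^+ 2 = (1 - 'X ^+ 2) * (chebTU k).2 ^+ 2.
Proof.
elim: k => [|k /=]; first by rewrite expr1n subrr expr0n /= mulr0.
case: (chebTU k) => t u /= IH; apply/eqP; rewrite -subr_eq0.
have norm_mul : 1 - ('X * t - (1 - 'X ^+ 2) * u) ^+ 2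
                - (1 - 'X ^+ 2) * ('X * u + t) ^+ 2
              = 1 - t ^+ 2 - (1 - 'X ^+ 2) * u ^+ 2 by ring.
by rewrite norm_mul IH subrr.
Qed.

Lemma chebTU_rec k :
  (chebTU k.+2).1 = 2%:R *: 'X * (chebTU k.+1).1 - (chebTU k).1.
Proof.
by rewrite /=; case: (chebTU k) => t u /=; rewrite -mul_polyC rmorph_nat; ring.
Qed.

Lemma chebT_TU k : chebT R k = (chebTU k).1.
Proof.
rewrite /chebT; suff -> : cheb_pair R k = ((chebTU k).1, (chebTU k.+1).1) by [].
elim: k => [|k /= ->]; first by rewrite /= mulr1 mulr0 subr0.
by rewrite chebTU_rec.
Qed.

Lemma chebT_pell k : 1 - chebT R k ^+ 2 = (1 - 'X ^+ 2) * (chebTU k).2 ^+ 2.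
Proof. by rewrite chebT_TU chebTU_pell. Qed.

Lemma size_chebT k : (size (chebT R k) <= k.+1)%N.
Proof.
suff : (size (cheb_pair R k).1 <= k.+1)%N /\ (size (cheb_pair R k).2 <= k.+2)%N.
  by case.
elim: k => [|k /=]; first by rewrite size_poly1 size_polyX.
case: (cheb_pair R k) => a b /= [size_a size_b]; split=> //.
apply: leq_trans (size_polyD _ _) _; rewrite size_polyN geq_max.
rewrite (leq_trans size_a (leqW (leqnSn _))) andbT.
have size_2X : (size (2%:R *: 'X : {poly R}) <= 2)%N.
  exact: leq_trans (size_scale_leq _ _) (eq_leq (size_polyX R)).
apply: leq_trans (size_polyMleq _ _) _; rewrite -subn1 leq_subLR.
by apply: leq_trans (leq_add size_2X size_b) _; lia.
Qed.

End Chebyshev.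

Section Certificates.
Context {R : realType} {r : R} {d : nat}.
Hypothesis hQ : inQ d (r%:P - 'X).

Lemma inQ_expX k : inQ (d * k) (r%:P - 'X ^+ k) /\ inQ (d * k) (r%:P + 'X ^+ k).
Proof.
have sos_geom : is_sos (\sum_(i < k) ('X ^+ i) ^+ 2 : {poly R}).
  by apply: is_sos_sum => i; exact: is_sos_sqr.
exact: inQ_comp hQ (onem_sqr_expr 'X k) sos_geom (eq_leq (size_polyXn _ k)).
Qed.

Lemma inQ_chebT k :
  inQ (d * k) (r%:P - chebT R k) /\ inQ (d * k) (r%:P + chebT R k).
Proof. exact: inQ_comp hQ (chebT_pell k) (is_sos_sqr _) (size_chebT k). Qed.

End Certificates.

Theorem lemma16 (R : realType) (r : R) (d : nat) :
  0 < r -> inQ d (r%:P - 'X) ->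
  forall k : nat,
    inQ (d * k) (r%:P - 'X ^+ k) /\ inQ (d * k) (r%:P + 'X ^+ k) /\
    inQ (d * k) (r%:P - chebT R k) /\ inQ (d * k) (r%:P + chebT R k).
Proof.
move=> _ hQ k.
have [minus_Xk plus_Xk] := inQ_expX hQ k.
have [minus_T plus_T] := inQ_chebT hQ k.
exact: (conj minus_Xk (conj plus_Xk (conj minus_T plus_T))).
Qed.
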